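(* Let $N\ge1$, $s\ge2$ be integers, $\epsilon=1/N$, $F>0$, and let $\phi:(0,\infty)\to\mathbb R$ be twice differentiable with $\phi''_{kF}:=\phi''(kF)$. Suppose $\phi''_{kF}\le0$ for $k=2,\dots,s$. Call $\mathbf y_F$ a stable equilibrium of the $s$th-nearest-neighbour atomistic model if $$\epsilon\sum_{\ell=-N+1}^{N}\sum_{k=1}^{s}\phi''_{kF}\Big(\sum_{j=0}^{k-1}u'_{\ell+j}\Big)^2>0\quad\text{for all }\mathbf u\in\mathcal U\setminus\{\mathbf 0\}.$$ Then there exists a constant $B=B_F$ satisfying $$\sum_{k=2}^{s}(k-1)\phi''_{kF}\ \ge\ B_F\ \ge\ \phi''_{2F}+\sum_{k=3}^{s}\frac{k^4-k^2}{12}\phi''_{kF}$$ such that $\mathbf y_F$ is a stable equilibrium of the atomistic model if and only if $A^s_F-\epsilon^2\mu_\epsilon^2B_F>0$, where $A^s_F:=\sum_{k=1}^{s}k^2\phi''_{kF}$.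
   Context: $\mathcal{U}$ is the space of real sequences $\mathbf u=(u_\ell)_{\ell\in\mathbb{Z}}$ with $u_{\ell+2N}=u_\ell$ and $\sum_{\ell=-N+1}^{N}u_\ell=0$; $(\mathbf y_F)_\ell=F\epsilon\ell$. For a sequence $\mathbf v$, $v'_\ell=(v_\ell-v_{\ell-1})/\epsilon$, $v''_\ell=(v'_\ell-v'_{\ell-1})/\epsilon$. $\|\mathbf v\|_{\ell^2_\epsilon}=(\epsilon\sum_{\ell=-N+1}^N v_\ell^2)^{1/2}$. $\mu_\epsilon:=\inf_{\Psi\in\mathcal U\setminus\{\mathbf 0\}}\|\Psi''\|_{\ell^2_\epsilon}/\|\Psi'\|_{\ell^2_\epsilon}$, which equals $2\sin(\pi\epsilon/2)/\epsilon$. *)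

From Stdlib Require Import Reals ZArith List.
From Coquelicot Require Import Coquelicot.
Open Scope R_scope.

Definition sumZ (a b : Z) (f : Z -> R) : R :=
  fold_right Rplus 0
    (map (fun i => f (a + Z.of_nat i)%Z) (seq 0 (Z.to_nat (b - a + 1)))).

Definition sumN (a b : nat) (f : nat -> R) : R :=
  fold_right Rplus 0 (map f (seq a (S b - a))).

Definition eps (N : nat) : R := / INR N.

Definition inU (N : nat) (u : Z -> R) : Prop :=
  (forall l : Z, u (l + 2 * Z.of_nat N)%Z = u l) /\
  sumZ (- Z.of_nat N + 1) (Z.of_nat N) u = 0.

Definition dd (N : nat) (v : Z -> R) : Z -> R :=
  fun l => (v l - v (l - 1)%Z) / eps N.

Definition l2eps (N : nat) (v : Z -> R) : R :=
  sqrt (eps N * sumZ (- Z.of_nat N + 1) (Z.of_nat N) (fun l => (v l) ^ 2)).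

Definition mu_eps (N : nat) : R :=
  real (Glb_Rbar (fun x => exists Psi : Z -> R,
    inU N Psi /\ Psi <> (fun _ => 0) /\
    x = l2eps N (dd N (dd N Psi)) / l2eps N (dd N Psi))).

Definition phi2 (phi : R -> R) (x : R) : R := Derive (Derive phi) x.

Definition stable_atomistic (N s : nat) (phi : R -> R) (F : R) : Prop :=
  forall u : Z -> R, inU N u -> u <> (fun _ => 0) ->
    eps N * sumZ (- Z.of_nat N + 1) (Z.of_nat N) (fun l =>
      sumN 1 s (fun k => phi2 phi (INR k * F) *
        (sumN 0 (k - 1) (fun j => dd N u (l + Z.of_nat j)%Z)) ^ 2)) > 0.

Definition A_sF (s : nat) (phi : R -> R) (F : R) : R :=
  sumN 1 s (fun k => (INR k) ^ 2 * phi2 phi (INR k * F)).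

(* Write [v = u'] and let [T_k(v) = sum_l (v_l + ... + v_(l+k-1))^2] be the energy of blocks of
   [k] consecutive bonds, so that the quadratic form of the atomistic model is
   [sum_k phi''_(kF) T_k(v)].  Expanding the square gives the recursion
   [T_(k+1) = T_k + (2k+1) |v|^2 - sum_(j<=k) |v_(.+k) - v_(.+j)|^2], and each of these gap
   terms lies between [|v'|^2] and [(k-j)^2 |v'|^2] (telescoping and Cauchy-Schwarz); summing,
   [k^2 |v|^2 - (k^4-k^2)/12 |v'|^2 <= T_k(v) <= k^2 |v|^2 - (k-1) |v'|^2].
   Since [phi''_(kF) <= 0] for [k >= 2], the form lies between [A |v|^2 - U |v'|^2] and
   [A |v|^2 - L |v'|^2], where [U] and [L] are the two bounds on [B].  By Parseval, the discrete
   Wirtinger inequality [|v'|^2 >= lambda |v|^2] holds for zero-mean periodic [v], with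
   [lambda = 2 - 2 cos (PI / N) = eps^2 mu_eps^2], and the lowest cosine mode attains it.
   Hence [A - lambda U > 0] implies stability, which implies [A - lambda L > 0], and this is all
   the existence of the threshold [B] requires. *)

From Stdlib Require Import Reals ZArith List Lia Lra Psatz FunctionalExtensionality Classical.
From Coquelicot Require Import Coquelicot.
Open Scope R_scope.

Definition sum_lt (n : nat) (g : nat -> R) : R := fold_right Rplus 0 (map g (seq 0 n)).

Lemma sum_lt_0 g : sum_lt 0 g = 0. Proof. reflexivity. Qed.

Lemma map_seq_shift (g : nat -> R) a n :
  map g (seq a n) = map (fun i => g (a + i)%nat) (seq 0 n).
Proof.
  revert a g; induction n as [|n IH]; intros a g; simpl; auto.
  rewrite Nat.add_0_r. f_equal. rewrite (IH (S a)), (IH 1%nat).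
  apply map_ext; intro i. f_equal. lia.
Qed.

Lemma sum_lt_Sl n g : sum_lt (S n) g = g 0%nat + sum_lt n (fun i => g (S i)).
Proof.
  unfold sum_lt; simpl. f_equal. rewrite map_seq_shift. reflexivity.
Qed.

Lemma sum_lt_Sr n g : sum_lt (S n) g = sum_lt n g + g n.
Proof.
  induction n as [|n IH] in g |- *.
  - unfold sum_lt; simpl; ring.
  - rewrite sum_lt_Sl, IH, sum_lt_Sl. ring.
Qed.

Lemma sum_lt_ext n g h : (forall i, (i < n)%nat -> g i = h i) -> sum_lt n g = sum_lt n h.
Proof.
  induction n as [|n IH]; intros H; auto.
  rewrite !sum_lt_Sr, IH by (intros; apply H; lia). rewrite H by lia. reflexivity.
Qed.

Lemma sum_lt_le n g h : (forall i, (i < n)%nat -> g i <= h i) -> sum_lt n g <= sum_lt n h.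
Proof.
  induction n as [|n IH]; intros H; [unfold sum_lt; simpl; lra|].
  rewrite !sum_lt_Sr. apply Rplus_le_compat; [apply IH; intros; apply H; lia| apply H; lia].
Qed.

Lemma sum_lt_plus n g h : sum_lt n (fun i => g i + h i) = sum_lt n g + sum_lt n h.
Proof. induction n; [unfold sum_lt; simpl; ring|rewrite !sum_lt_Sr, IHn; ring]. Qed.

Lemma sum_lt_scal n c g : sum_lt n (fun i => c * g i) = c * sum_lt n g.
Proof. induction n; [unfold sum_lt; simpl; ring|rewrite !sum_lt_Sr, IHn; ring]. Qed.

Lemma sum_lt_const n c : sum_lt n (fun _ => c) = INR n * c.
Proof. induction n; [unfold sum_lt; simpl; ring|rewrite !sum_lt_Sr, IHn, S_INR; ring]. Qed.

Lemma sum_lt_comm n m (F : nat -> nat -> R) :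
  sum_lt n (fun i => sum_lt m (fun j => F i j)) = sum_lt m (fun j => sum_lt n (fun i => F i j)).
Proof.
  induction n.
  - rewrite sum_lt_0. rewrite (sum_lt_ext m _ (fun _ => 0)) by (intros; apply sum_lt_0).
    rewrite sum_lt_const; ring.
  - rewrite sum_lt_Sr, IHn. rewrite <- sum_lt_plus. apply sum_lt_ext; intros. now rewrite sum_lt_Sr.
Qed.

Lemma sum_lt_nonneg n g : (forall i, (i < n)%nat -> 0 <= g i) -> 0 <= sum_lt n g.
Proof. intros H. rewrite <- (Rmult_0_r (INR n)), <- sum_lt_const. now apply sum_lt_le. Qed.

Lemma sum_lt_eq0 n g : (forall i, (i < n)%nat -> 0 <= g i) -> sum_lt n g = 0 ->
  forall i, (i < n)%nat -> g i = 0.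
Proof.
  induction n; intros H0 H i Hi; [lia|].
  rewrite sum_lt_Sr in H.
  assert (0 <= sum_lt n g) by (apply sum_lt_nonneg; intros; apply H0; lia).
  assert (0 <= g n) by (apply H0; lia).
  destruct (Nat.eq_dec i n) as [->|]; [lra|].
  apply IHn; [intros; apply H0; lia| lra| lia].
Qed.

Lemma sum_lt_single n g i0 : (i0 < n)%nat -> (forall i, (i < n)%nat -> i <> i0 -> g i = 0) ->
  sum_lt n g = g i0.
Proof.
  induction n; intros Hi H; [lia|].
  rewrite sum_lt_Sr. destruct (Nat.eq_dec i0 n) as [->|].
  - rewrite (sum_lt_ext n _ (fun _ => 0)) by (intros; apply H; lia). rewrite sum_lt_const; ring.
  - rewrite IHn by (intros; try apply H; lia). rewrite (H n) by lia. ring.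
Qed.

Lemma sum_lt_id n : sum_lt n (fun i => INR i) = INR n * (INR n - 1) / 2.
Proof. induction n; [rewrite sum_lt_0; simpl; field|rewrite sum_lt_Sr, IHn, S_INR; field]. Qed.

Lemma sum_lt_sq n : sum_lt n (fun i => INR i ^ 2) = (INR n - 1) * INR n * (2 * INR n - 1) / 6.
Proof. induction n; [rewrite sum_lt_0; simpl; field|rewrite sum_lt_Sr, IHn, S_INR; field]. Qed.

Lemma sum_lt_sq_le n x : sum_lt n x ^ 2 <= INR n * sum_lt n (fun i => x i ^ 2).
Proof.
  induction n as [|n IH]; [unfold sum_lt; simpl; lra|].
  rewrite !sum_lt_Sr, S_INR.
  set (S0 := sum_lt n x) in *. set (Q := sum_lt n (fun i => x i ^ 2)) in *.
  assert (HQ : 0 <= Q) by (apply sum_lt_nonneg; intros; nra).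
  destruct n as [|n]; [unfold S0, Q, sum_lt; simpl; lra|].
  assert (Hn : 0 < INR (S n)) by (apply lt_0_INR; lia).
  (* AM-GM: [2 S0 x_n <= S0^2 / n + n x_n^2 <= Q + n x_n^2] *)
  assert (Hcross : 2 * S0 * x (S n) <= Q + INR (S n) * x (S n) ^ 2).
  { apply Rmult_le_reg_l with (INR (S n)); [lra|].
    assert (0 <= (S0 - INR (S n) * x (S n)) ^ 2) by apply pow2_ge_0. nra. }
  nra.
Qed.

Definition wsum (N : nat) (f : Z -> R) : R := sumZ (- Z.of_nat N + 1) (Z.of_nat N) f.
Definition in_window (N : nat) (l : Z) : Prop := (- Z.of_nat N + 1 <= l <= Z.of_nat N)%Z.
Definition periodic (N : nat) (f : Z -> R) : Prop := forall l, f (l + 2 * Z.of_nat N)%Z = f l.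

Lemma wsum_sum_lt N f : wsum N f = sum_lt (2 * N) (fun i => f (- Z.of_nat N + 1 + Z.of_nat i)%Z).
Proof.
  unfold wsum, sumZ, sum_lt.
  replace (Z.to_nat (Z.of_nat N - (- Z.of_nat N + 1) + 1)) with (2 * N)%nat by lia.
  reflexivity.
Qed.

Lemma wsum_ext N f g : (forall l, in_window N l -> f l = g l) -> wsum N f = wsum N g.
Proof. intros H; rewrite !wsum_sum_lt; apply sum_lt_ext; intros; apply H; unfold in_window; lia. Qed.

Lemma wsum_le N f g : (forall l, in_window N l -> f l <= g l) -> wsum N f <= wsum N g.
Proof. intros H; rewrite !wsum_sum_lt; apply sum_lt_le; intros; apply H; unfold in_window; lia. Qed.

Lemma wsum_plus N f g : wsum N (fun l => f l + g l) = wsum N f + wsum N g.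
Proof. rewrite !wsum_sum_lt; apply sum_lt_plus. Qed.

Lemma wsum_scal N c f : wsum N (fun l => c * f l) = c * wsum N f.
Proof. rewrite !wsum_sum_lt; apply sum_lt_scal. Qed.

Lemma wsum_const N c : wsum N (fun _ => c) = 2 * INR N * c.
Proof. rewrite wsum_sum_lt, sum_lt_const, mult_INR. simpl. ring. Qed.

Lemma wsum_opp N f : wsum N (fun l => - f l) = - wsum N f.
Proof. rewrite <- (wsum_ext N (fun l => -1 * f l)) by (intros; ring). rewrite wsum_scal; ring. Qed.

Lemma wsum_minus N f g : wsum N (fun l => f l - g l) = wsum N f - wsum N g.
Proof. unfold Rminus. rewrite wsum_plus, wsum_opp. ring. Qed.

Lemma wsum_nonneg N f : (forall l, in_window N l -> 0 <= f l) -> 0 <= wsum N f.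
Proof. intros H; rewrite wsum_sum_lt; apply sum_lt_nonneg; intros; apply H; unfold in_window; lia. Qed.

Lemma wsum_sum_lt_comm N n (F : nat -> Z -> R) :
  wsum N (fun l => sum_lt n (fun i => F i l)) = sum_lt n (fun i => wsum N (F i)).
Proof.
  rewrite wsum_sum_lt, sum_lt_comm. apply sum_lt_ext; intros. now rewrite wsum_sum_lt.
Qed.

Lemma wsum_comm N M (F : Z -> Z -> R) :
  wsum N (fun l => wsum M (fun m => F l m)) = wsum M (fun m => wsum N (fun l => F l m)).
Proof.
  rewrite (wsum_ext N _ (fun l => sum_lt (2 * M) (fun j => F l (- Z.of_nat M + 1 + Z.of_nat j)%Z)))
    by (intros; apply wsum_sum_lt).
  rewrite wsum_sum_lt_comm. symmetry. apply wsum_sum_lt.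
Qed.

Lemma wsum_eq0 N f : (forall l, in_window N l -> 0 <= f l) -> wsum N f = 0 ->
  forall l, in_window N l -> f l = 0.
Proof.
  intros H0 H l Hl. rewrite wsum_sum_lt in H.
  assert (E : forall i, (i < 2*N)%nat -> f (- Z.of_nat N + 1 + Z.of_nat i)%Z = 0).
  { apply (sum_lt_eq0 _ (fun i => f (- Z.of_nat N + 1 + Z.of_nat i)%Z)); [|exact H].
    intros; apply H0; unfold in_window; lia. }
  unfold in_window in Hl.
  replace l with (- Z.of_nat N + 1 + Z.of_nat (Z.to_nat (l + Z.of_nat N - 1)))%Z by lia.
  apply E. lia.
Qed.

Lemma wsum_single N f l0 : in_window N l0 -> (forall l, in_window N l -> l <> l0 -> f l = 0) ->
  wsum N f = f l0.
Proof.
  intros Hl H. rewrite wsum_sum_lt. unfold in_window in Hl.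
  rewrite (sum_lt_single _ _ (Z.to_nat (l0 + Z.of_nat N - 1))).
  - f_equal. lia.
  - lia.
  - intros i Hi Hne. apply H; unfold in_window; lia.
Qed.

Lemma wsum_shift1 N f : (1 <= N)%nat -> periodic N f -> wsum N (fun l => f (l + 1)%Z) = wsum N f.
Proof.
  intros HN Hp. rewrite !wsum_sum_lt.
  destruct (2 * N)%nat as [|n] eqn:E; [lia|].
  rewrite sum_lt_Sr, sum_lt_Sl.
  assert (f (- Z.of_nat N + 1 + Z.of_nat n + 1)%Z = f (- Z.of_nat N + 1 + Z.of_nat 0)%Z) as ->.
  { rewrite <- (Hp (- Z.of_nat N + 1 + Z.of_nat 0)%Z). f_equal. lia. }
  rewrite Rplus_comm. f_equal. apply sum_lt_ext; intros. f_equal. lia.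
Qed.

Lemma periodic_shift N f d : periodic N f -> periodic N (fun l => f (l + d)%Z).
Proof. intros H l. cbv beta. rewrite <- (H (l + d)%Z). f_equal. lia. Qed.

Lemma wsum_shift_nat N f (n : nat) : (1 <= N)%nat -> periodic N f ->
  wsum N (fun l => f (l + Z.of_nat n)%Z) = wsum N f.
Proof.
  intros HN Hp. induction n.
  - apply wsum_ext; intros; f_equal; lia.
  - rewrite <- IHn, <- (wsum_shift1 N (fun l => f (l + Z.of_nat n)%Z)) by auto using periodic_shift.
    apply wsum_ext; intros; f_equal; lia.
Qed.

Lemma wsum_shift N f d : (1 <= N)%nat -> periodic N f -> wsum N (fun l => f (l + d)%Z) = wsum N f.
Proof.
  intros HN Hp. destruct (Z_le_gt_dec 0 d).
  - replace d with (Z.of_nat (Z.to_nat d)) by lia. now apply wsum_shift_nat.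
  - symmetry.
    rewrite <- (wsum_shift_nat N (fun l => f (l + d)%Z) (Z.to_nat (- d))) by auto using periodic_shift.
    apply wsum_ext; intros; f_equal; lia.
Qed.

Lemma periodic_nat N f (n : nat) : periodic N f -> forall l, f (l + 2 * Z.of_nat N * Z.of_nat n)%Z = f l.
Proof.
  intros H. induction n; intro l.
  - f_equal; lia.
  - rewrite <- (IHn l). rewrite <- (H (l + 2 * Z.of_nat N * Z.of_nat n)%Z). f_equal. lia.
Qed.

Lemma periodic_zero N f : (1 <= N)%nat -> periodic N f ->
  (forall l, in_window N l -> f l = 0) -> forall l, f l = 0.
Proof.
  intros HN Hp H l.
  set (M := (2 * Z.of_nat N)%Z).
  assert (HM : (0 < M)%Z) by lia.
  set (r := ((l + Z.of_nat N - 1) mod M)%Z). set (q := ((l + Z.of_nat N - 1) / M)%Z).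
  assert (Hr := Z.mod_pos_bound (l + Z.of_nat N - 1) M HM).
  assert (Hd := Z.div_mod (l + Z.of_nat N - 1) M ltac:(lia)).
  fold r q in Hr, Hd.
  destruct (Z_le_gt_dec 0 q).
  - replace l with ((r - Z.of_nat N + 1) + 2 * Z.of_nat N * Z.of_nat (Z.to_nat q))%Z by (subst M; lia).
    rewrite periodic_nat by auto. apply H. unfold in_window. subst M; lia.
  - rewrite <- (periodic_nat N f (Z.to_nat (- q)) Hp l).
    apply H. unfold in_window. subst M. nia.
Qed.

Definition sq_sum (N : nat) (v : Z -> R) : R := wsum N (fun l => v l ^ 2).
Definition diff_sq_sum (N : nat) (v : Z -> R) : R := wsum N (fun l => (v l - v (l - 1)%Z) ^ 2).

Lemma INR_pos N : (1 <= N)%nat -> 0 < INR N.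
Proof. intros; apply lt_0_INR; lia. Qed.

Lemma IZR_add_period l N : IZR (l + 2 * Z.of_nat N) = IZR l + 2 * INR N.
Proof. rewrite plus_IZR, mult_IZR, INR_IZR_INZ. reflexivity. Qed.

Lemma cos_period_Z x m : cos (x + 2 * IZR m * PI) = cos x.
Proof.
  destruct (Z_le_gt_dec 0 m).
  - replace m with (Z.of_nat (Z.to_nat m)) by lia. rewrite <- INR_IZR_INZ. apply cos_period.
  - rewrite <- (cos_period (x + 2 * IZR m * PI) (Z.to_nat (- m))). f_equal.
    rewrite INR_IZR_INZ, Z2Nat.id by lia. rewrite opp_IZR. ring.
Qed.

Lemma sin_period_Z x m : sin (x + 2 * IZR m * PI) = sin x.
Proof.
  destruct (Z_le_gt_dec 0 m).
  - replace m with (Z.of_nat (Z.to_nat m)) by lia. rewrite <- INR_IZR_INZ. apply sin_period.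
  - rewrite <- (sin_period (x + 2 * IZR m * PI) (Z.to_nat (- m))). f_equal.
    rewrite INR_IZR_INZ, Z2Nat.id by lia. rewrite opp_IZR. ring.
Qed.

Lemma cos_neq1 a : -2 * PI < a < 2 * PI -> a <> 0 -> cos a <> 1.
Proof.
  intros Ha Hne Hc.
  replace a with (2 * (a / 2)) in Hc by field. rewrite cos_2a_sin in Hc.
  assert (Hs : sin (a / 2) = 0) by nra.
  destruct (Rlt_dec 0 a).
  - assert (0 < sin (a / 2)) by (apply sin_gt_0; lra). lra.
  - assert (0 < sin (- (a / 2))) by (apply sin_gt_0; lra). rewrite sin_neg in *. lra.
Qed.

Definition freq (N : nat) (m : Z) : R := PI * IZR m / INR N.

Lemma freq_period N m l : (1 <= N)%nat ->
  freq N m * IZR (l + 2 * Z.of_nat N) = freq N m * IZR l + 2 * IZR m * PI.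
Proof. intros HN. assert (HNp := INR_pos N HN). rewrite IZR_add_period. unfold freq. field. lra. Qed.

(* Orthogonality: the sum of a nontrivial character over a period vanishes,
   because the sum is invariant under the shifts [m -> m +- 1]. *)
Lemma wsum_cos_freq N d : (1 <= N)%nat -> d <> 0%Z -> (- 2 * Z.of_nat N < d < 2 * Z.of_nat N)%Z ->
  wsum N (fun m => cos (freq N m * IZR d)) = 0.
Proof.
  intros HN Hd Hb. assert (HNp := INR_pos N HN). assert (Hpi := PI_RGT_0).
  set (al := freq N d).
  set (g := fun m => cos (al * IZR m)).
  rewrite (wsum_ext _ _ g) by (intros; unfold g, al, freq; f_equal; field; lra).
  assert (Hg : periodic N g).
  { intro m. unfold g. rewrite <- (cos_period_Z (al * IZR m) d). f_equal.
    rewrite IZR_add_period. unfold al, freq. field. lra. }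
  assert (Hshift : wsum N (fun m => g (m + 1)%Z + g (m + -1)%Z) = 2 * cos al * wsum N g).
  { rewrite <- wsum_scal. apply wsum_ext; intros. unfold g. rewrite !plus_IZR.
    replace (al * (IZR l + IZR 1)) with (al * IZR l + al) by (simpl; ring).
    replace (al * (IZR l + IZR (-1))) with (al * IZR l - al) by (simpl; ring).
    rewrite cos_plus, cos_minus. ring. }
  rewrite wsum_plus, !wsum_shift in Hshift by auto.
  assert (Hal : cos al <> 1).
  { assert (Hd' : -2 * INR N < IZR d < 2 * INR N).
    { assert (Hz : IZR (- 2 * Z.of_nat N) < IZR d < IZR (2 * Z.of_nat N))
        by (split; apply IZR_lt; lia).
      rewrite !mult_IZR, <- INR_IZR_INZ in Hz. exact Hz. }
    assert (Ha : al * INR N = PI * IZR d) by (unfold al, freq; field; lra).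
    apply cos_neq1.
    - split; apply Rmult_lt_reg_r with (INR N); auto; rewrite Ha; nra.
    - intro H0. apply Hd, eq_IZR. apply (Rmult_eq_reg_l PI); [|lra].
      rewrite <- Ha, H0. ring. }
  assert (H0 : (1 - cos al) * wsum N g = 0) by lra.
  apply Rmult_integral in H0 as [H0|H0]; [lra|exact H0].
Qed.

Lemma wsum_mul N f g : wsum N f * wsum N g = wsum N (fun l => wsum N (fun l' => f l * g l')).
Proof.
  rewrite Rmult_comm, <- wsum_scal. apply wsum_ext; intros.
  rewrite Rmult_comm, <- wsum_scal. apply wsum_ext; intros. ring.
Qed.

Definition fourier_cos N (v : Z -> R) m := wsum N (fun l => v l * cos (freq N m * IZR l)).
Definition fourier_sin N (v : Z -> R) m := wsum N (fun l => v l * sin (freq N m * IZR l)).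

Lemma parseval N v : (1 <= N)%nat ->
  wsum N (fun m => fourier_cos N v m ^ 2 + fourier_sin N v m ^ 2) = 2 * INR N * sq_sum N v.
Proof.
  intros HN.
  transitivity (wsum N (fun m => wsum N (fun l => wsum N (fun l' =>
                  v l * v l' * cos (freq N m * IZR (l - l')))))).
  { apply wsum_ext; intros m _. unfold fourier_cos, fourier_sin.
    rewrite <- !Rsqr_pow2; unfold Rsqr. rewrite !wsum_mul, <- wsum_plus.
    apply wsum_ext; intros l _. rewrite <- wsum_plus. apply wsum_ext; intros l' _.
    rewrite minus_IZR, Rmult_minus_distr_l, cos_minus. ring. }
  rewrite wsum_comm, (wsum_ext _ _ (fun l => wsum N (fun l' => wsum N (fun m =>
             v l * v l' * cos (freq N m * IZR (l - l')))))) by (intros; apply wsum_comm).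
  unfold sq_sum. rewrite <- wsum_scal. apply wsum_ext; intros l Hl.
  rewrite (wsum_single N _ l Hl).
  - rewrite wsum_scal, Z.sub_diag, (wsum_ext _ _ (fun _ => 1)), wsum_const by
      (intros; rewrite Rmult_0_r; apply cos_0).
    ring.
  - intros l' Hl' Hne. rewrite wsum_scal, wsum_cos_freq; [ring|auto|lia|unfold in_window in *; lia].
Qed.

Lemma fourier_cos_pred N v m : (1 <= N)%nat -> periodic N v ->
  fourier_cos N (fun l => v (l - 1)%Z) m
  = cos (freq N m) * fourier_cos N v m - sin (freq N m) * fourier_sin N v m.
Proof.
  intros HN Hp. set (h := fun l => v (l - 1)%Z * cos (freq N m * IZR l)).
  assert (Hh : periodic N h).
  { intro l. unfold h. rewrite freq_period, cos_period_Z by auto.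
    f_equal. rewrite <- (Hp (l - 1)%Z). f_equal. lia. }
  unfold fourier_cos at 1. fold h. rewrite <- (wsum_shift N h 1 HN Hh).
  unfold fourier_cos, fourier_sin, Rminus. rewrite <- !wsum_scal, <- wsum_opp, <- wsum_plus.
  apply wsum_ext; intros l _. unfold h. rewrite plus_IZR.
  replace (l + 1 - 1)%Z with l by lia. rewrite Rmult_plus_distr_l, Rmult_1_r, cos_plus. ring.
Qed.

Lemma fourier_sin_pred N v m : (1 <= N)%nat -> periodic N v ->
  fourier_sin N (fun l => v (l - 1)%Z) m
  = sin (freq N m) * fourier_cos N v m + cos (freq N m) * fourier_sin N v m.
Proof.
  intros HN Hp. set (h := fun l => v (l - 1)%Z * sin (freq N m * IZR l)).
  assert (Hh : periodic N h).
  { intro l. unfold h. rewrite freq_period, sin_period_Z by auto.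
    f_equal. rewrite <- (Hp (l - 1)%Z). f_equal. lia. }
  unfold fourier_sin at 1. fold h. rewrite <- (wsum_shift N h 1 HN Hh).
  unfold fourier_cos, fourier_sin. rewrite <- !wsum_scal, <- wsum_plus.
  apply wsum_ext; intros l _. unfold h. rewrite plus_IZR.
  replace (l + 1 - 1)%Z with l by lia. rewrite Rmult_plus_distr_l, Rmult_1_r, sin_plus. ring.
Qed.

Lemma fourier_energy_diff N v m : (1 <= N)%nat -> periodic N v ->
  fourier_cos N (fun l => v l - v (l - 1)%Z) m ^ 2 + fourier_sin N (fun l => v l - v (l - 1)%Z) m ^ 2
  = (2 - 2 * cos (freq N m)) * (fourier_cos N v m ^ 2 + fourier_sin N v m ^ 2).
Proof.
  intros HN Hp. set (w := fun l => v l - v (l - 1)%Z).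
  assert (Ea : fourier_cos N w m = fourier_cos N v m - fourier_cos N (fun l => v (l - 1)%Z) m)
    by (unfold fourier_cos, w; rewrite <- wsum_minus; apply wsum_ext; intros; ring).
  assert (Eb : fourier_sin N w m = fourier_sin N v m - fourier_sin N (fun l => v (l - 1)%Z) m)
    by (unfold fourier_sin, w; rewrite <- wsum_minus; apply wsum_ext; intros; ring).
  rewrite Ea, Eb, fourier_cos_pred, fourier_sin_pred by auto.
  assert (Hcs := sin2_cos2 (freq N m)). rewrite !Rsqr_pow2 in Hcs.
  nra.
Qed.

Lemma cos_freq_le N m : (1 <= N)%nat -> in_window N m -> m <> 0%Z ->
  cos (freq N m) <= cos (PI / INR N).
Proof.
  intros HN Hm Hne. assert (HNp := INR_pos N HN). assert (Hpi := PI_RGT_0).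
  assert (Hstep : 0 < PI / INR N) by (apply Rdiv_lt_0_compat; lra).
  assert (HPI : PI / INR N * INR N = PI) by (field; lra).
  assert (Hm' : 1 <= IZR (Z.abs m) <= INR N)
    by (rewrite INR_IZR_INZ; unfold in_window in Hm; split; apply IZR_le; lia).
  assert (Ecos : cos (freq N m) = cos (PI / INR N * IZR (Z.abs m))).
  { unfold freq. destruct (Z.abs_spec m) as [[_ ->]|[_ ->]]; [|rewrite opp_IZR, <- cos_neg];
      f_equal; field; lra. }
  rewrite Ecos. apply cos_decr_1; nra.
Qed.

Definition lambda1 (N : nat) : R := 2 - 2 * cos (PI / INR N).

(* Every nonconstant Fourier mode has frequency at least [PI / N]. *)
Lemma discrete_wirtinger N v : (1 <= N)%nat -> periodic N v -> wsum N v = 0 ->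
  lambda1 N * sq_sum N v <= diff_sq_sum N v.
Proof.
  intros HN Hp Hmean. assert (HNp := INR_pos N HN).
  set (w := fun l => v l - v (l - 1)%Z).
  assert (Hmodes : wsum N (fun m => lambda1 N * (fourier_cos N v m ^ 2 + fourier_sin N v m ^ 2))
                   <= wsum N (fun m => fourier_cos N w m ^ 2 + fourier_sin N w m ^ 2)).
  { apply wsum_le; intros m Hm. unfold w. rewrite fourier_energy_diff by auto. unfold lambda1.
    destruct (Z.eq_dec m 0) as [->|Hne].
    - assert (Hc : fourier_cos N v 0 = 0).
      { rewrite <- Hmean. apply wsum_ext; intros. unfold freq.
        rewrite Rmult_0_r, Rdiv_0_l, Rmult_0_l, cos_0. ring. }
      assert (Hs : fourier_sin N v 0 = 0).
      { transitivity (wsum N (fun _ => 0)); [|rewrite wsum_const; ring].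
        apply wsum_ext; intros. unfold freq.
        rewrite Rmult_0_r, Rdiv_0_l, Rmult_0_l, sin_0. ring. }
      rewrite Hc, Hs. lra.
    - assert (cos (freq N m) <= cos (PI / INR N)) by (apply cos_freq_le; auto).
      nra. }
  rewrite wsum_scal, !parseval in Hmodes by auto.
  change (diff_sq_sum N v) with (sq_sum N w).
  apply Rmult_le_reg_l with (2 * INR N); lra.
Qed.

Lemma periodic_sq N f : periodic N f -> periodic N (fun l => f l ^ 2).
Proof. intros Hf l. cbv beta. now rewrite Hf. Qed.

Lemma periodic_diff N f d e : periodic N f -> periodic N (fun l => (f (l + d)%Z - f (l + e)%Z) ^ 2).
Proof.
  intros Hf l. cbv beta. rewrite <- (Hf (l + d)%Z), <- (Hf (l + e)%Z). do 3 f_equal; lia.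
Qed.

Lemma telescope (v : Z -> R) d l :
  v (l + Z.of_nat d)%Z - v l = sum_lt d (fun i => v (l + Z.of_nat i + 1)%Z - v (l + Z.of_nat i)%Z).
Proof.
  induction d as [|d IH].
  - rewrite sum_lt_0. replace (l + Z.of_nat 0)%Z with l by lia. ring.
  - rewrite sum_lt_Sr, <- IH. replace (l + Z.of_nat (S d))%Z with (l + Z.of_nat d + 1)%Z by lia. ring.
Qed.

Lemma sum_lt_sq_dist k : sum_lt k (fun j => (INR k - INR j) ^ 2) = INR k * (INR k + 1) * (2 * INR k + 1) / 6.
Proof.
  rewrite (sum_lt_ext _ _ (fun j => (INR k ^ 2 + (- 2 * INR k) * INR j) + INR j ^ 2)) by (intros; ring).
  rewrite !sum_lt_plus, sum_lt_scal, sum_lt_const, sum_lt_id, sum_lt_sq. field.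
Qed.

Section BlockEnergy.
Variable N : nat.
Variable v : Z -> R.
Hypothesis HN : (1 <= N)%nat.
Hypothesis Hp : periodic N v.

Definition block_energy (k : nat) : R :=
  wsum N (fun l => sum_lt k (fun j => v (l + Z.of_nat j)%Z) ^ 2).
Definition gap_energy (j k : nat) : R :=
  wsum N (fun l => (v (l + Z.of_nat k)%Z - v (l + Z.of_nat j)%Z) ^ 2).
Definition gap_total (k : nat) : R := sum_lt k (fun j => gap_energy j k).

Lemma sq_sum_shift d : wsum N (fun l => v (l + d)%Z ^ 2) = sq_sum N v.
Proof. apply (wsum_shift N (fun l => v l ^ 2)); auto using periodic_sq. Qed.

Lemma gap_energy_eq j k : (j <= k)%nat ->
  gap_energy j k = wsum N (fun l => (v (l + Z.of_nat (k - j))%Z - v (l + 0)%Z) ^ 2).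
Proof.
  intros Hjk. unfold gap_energy.
  rewrite <- (wsum_shift N (fun l => (v (l + Z.of_nat (k - j))%Z - v (l + 0)%Z) ^ 2) (Z.of_nat j) HN
               (periodic_diff N v _ _ Hp)).
  apply wsum_ext; intros. do 3 f_equal; lia.
Qed.

Lemma gap_energy_1 d : wsum N (fun l => (v (l + d + 1)%Z - v (l + d)%Z) ^ 2) = diff_sq_sum N v.
Proof.
  set (f := fun l => (v (l + 0)%Z - v (l + -1)%Z) ^ 2).
  transitivity (wsum N f).
  - rewrite <- (wsum_shift N f (d + 1) HN (periodic_diff N v 0 (-1) Hp)).
    apply wsum_ext; intros. unfold f. do 3 f_equal; lia.
  - apply wsum_ext; intros. unfold f. do 3 f_equal; lia.
Qed.

(* Telescoping plus Cauchy-Schwarz. *)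
Lemma gap_energy_le j k : (j <= k)%nat -> gap_energy j k <= (INR k - INR j) ^ 2 * diff_sq_sum N v.
Proof.
  intros Hjk. rewrite gap_energy_eq, <- minus_INR by auto.
  eapply Rle_trans.
  { apply wsum_le. intros l _. replace (l + 0)%Z with l by lia. rewrite telescope. apply sum_lt_sq_le. }
  rewrite wsum_scal, wsum_sum_lt_comm.
  rewrite (sum_lt_ext _ _ (fun _ => diff_sq_sum N v)) by (intros; apply gap_energy_1).
  rewrite sum_lt_const. lra.
Qed.

Lemma diff_sq_sum_le_gap_total k : (1 <= k)%nat -> diff_sq_sum N v <= gap_total k.
Proof.
  intros Hk. destruct k as [|k]; [lia|].
  assert (Hlast : gap_energy k (S k) = diff_sq_sum N v).
  { rewrite gap_energy_eq by lia. rewrite <- (gap_energy_1 0).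
    apply wsum_ext; intros. do 3 f_equal; lia. }
  unfold gap_total. rewrite sum_lt_Sr, Hlast.
  enough (0 <= sum_lt k (fun j => gap_energy j (S k))) by lra.
  apply sum_lt_nonneg; intros. apply wsum_nonneg; intros. apply pow2_ge_0.
Qed.

Lemma gap_total_le k : gap_total k <= INR k * (INR k + 1) * (2 * INR k + 1) / 6 * diff_sq_sum N v.
Proof.
  unfold gap_total. rewrite <- sum_lt_sq_dist, Rmult_comm, <- sum_lt_scal.
  apply sum_lt_le; intros j Hj. rewrite Rmult_comm. apply gap_energy_le. lia.
Qed.

(* Expand [(S_k + v_{l+k})^2] and write the cross terms [2 v_{l+j} v_{l+k}]
   as [v_{l+j}^2 + v_{l+k}^2 - (v_{l+j} - v_{l+k})^2]. *)
Lemma block_energy_S k : block_energy (S k) = block_energy k + (2 * INR k + 1) * sq_sum N v - gap_total k.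
Proof.
  unfold block_energy. set (Sk := fun l => sum_lt k (fun j => v (l + Z.of_nat j)%Z)).
  rewrite (wsum_ext _ _ (fun l => Sk l ^ 2 + 2 * (Sk l * v (l + Z.of_nat k)%Z) + v (l + Z.of_nat k)%Z ^ 2))
    by (intros; unfold Sk; rewrite sum_lt_Sr; ring).
  rewrite !wsum_plus, wsum_scal, sq_sum_shift.
  assert (Ecross : wsum N (fun l => Sk l * v (l + Z.of_nat k)%Z) = INR k * sq_sum N v - gap_total k / 2).
  { unfold Sk.
    rewrite (wsum_ext _ _ (fun l => sum_lt k (fun j => v (l + Z.of_nat j)%Z * v (l + Z.of_nat k)%Z)))
      by (intros; rewrite Rmult_comm, <- sum_lt_scal; apply sum_lt_ext; intros; ring).
    rewrite wsum_sum_lt_comm.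
    rewrite (sum_lt_ext _ _ (fun j => sq_sum N v + (- / 2) * gap_energy j k)).
    - rewrite sum_lt_plus, sum_lt_scal, sum_lt_const. unfold gap_total. field.
    - intros j _. unfold gap_energy.
      rewrite (wsum_ext _ _ (fun l => / 2 * v (l + Z.of_nat j)%Z ^ 2 + / 2 * v (l + Z.of_nat k)%Z ^ 2
                 + (- / 2) * (v (l + Z.of_nat k)%Z - v (l + Z.of_nat j)%Z) ^ 2)) by (intros; field).
      rewrite !wsum_plus, !wsum_scal, !sq_sum_shift. field. }
  rewrite Ecross. unfold Sk. field.
Qed.

Lemma block_energy_0 : block_energy 0 = 0.
Proof.
  unfold block_energy. rewrite (wsum_ext _ _ (fun _ => 0)), wsum_const by (intros; rewrite sum_lt_0; ring).
  ring.
Qed.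

Lemma block_energy_le k : (1 <= k)%nat ->
  block_energy k <= INR k ^ 2 * sq_sum N v - (INR k - 1) * diff_sq_sum N v.
Proof.
  induction k as [|k IH]; intros Hk; [lia|].
  rewrite block_energy_S, S_INR. destruct k as [|k].
  - rewrite block_energy_0. unfold gap_total. rewrite sum_lt_0. simpl. lra.
  - assert (IHk := IH ltac:(lia)). assert (Hgap := diff_sq_sum_le_gap_total (S k) ltac:(lia)). nra.
Qed.

Lemma block_energy_ge k :
  INR k ^ 2 * sq_sum N v - (INR k ^ 4 - INR k ^ 2) / 12 * diff_sq_sum N v <= block_energy k.
Proof.
  induction k as [|k IH].
  - rewrite block_energy_0. simpl. lra.
  - rewrite block_energy_S, S_INR. assert (Hgap := gap_total_le k). nra.
Qed.

Lemma block_energy_1 : block_energy 1 = sq_sum N v.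
Proof.
  assert (Hle := block_energy_le 1 (le_n 1)). assert (Hge := block_energy_ge 1).
  simpl INR in Hle, Hge. lra.
Qed.

End BlockEnergy.

Lemma eps_pos N : (1 <= N)%nat -> 0 < eps N.
Proof. intros; unfold eps; apply Rinv_0_lt_compat, INR_pos; auto. Qed.

Lemma dd_periodic N u : periodic N u -> periodic N (dd N u).
Proof.
  intros Hp l. unfold dd. rewrite Hp. f_equal. f_equal. rewrite <- (Hp (l - 1)%Z). f_equal. lia.
Qed.

Lemma wsum_dd N u : (1 <= N)%nat -> periodic N u -> wsum N (dd N u) = 0.
Proof.
  intros HN Hp. unfold dd.
  rewrite (wsum_ext _ _ (fun l => / eps N * (u l - u (l + -1)%Z)))
    by (intros; replace (l + -1)%Z with (l - 1)%Z by lia; unfold Rdiv; ring).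
  rewrite wsum_scal, wsum_minus, (wsum_shift N u (-1)) by auto. ring.
Qed.

Lemma const_of_pred_eq (u : Z -> R) : (forall l, u l = u (l - 1)%Z) -> forall l, u l = u 0%Z.
Proof.
  intros H.
  assert (Hn : forall n : nat, u (Z.of_nat n) = u 0%Z /\ u (- Z.of_nat n)%Z = u 0%Z).
  { induction n as [|n [IH1 IH2]]; [split; f_equal; lia|split].
    - rewrite H, <- IH1. f_equal. lia.
    - rewrite <- IH2, (H (- Z.of_nat n)%Z). f_equal. lia. }
  intro l. destruct (Z_le_gt_dec 0 l).
  - replace l with (Z.of_nat (Z.to_nat l)) by lia. apply Hn.
  - replace l with (- Z.of_nat (Z.to_nat (- l)))%Z by lia. apply Hn.
Qed.

(* The zero-mean condition rules out nonzero constants. *)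
Lemma sq_sum_dd_pos N u : (1 <= N)%nat -> inU N u -> u <> (fun _ => 0) -> 0 < sq_sum N (dd N u).
Proof.
  intros HN [Hp Hmean] Hne. assert (He := eps_pos N HN).
  assert (Hnn : 0 <= sq_sum N (dd N u)) by (apply wsum_nonneg; intros; apply pow2_ge_0).
  destruct Hnn as [|H0]; auto. exfalso. apply Hne.
  assert (Hdd : forall l, dd N u l = 0).
  { assert (Hsq : forall l, in_window N l -> dd N u l ^ 2 = 0)
      by (apply wsum_eq0; auto; intros; apply pow2_ge_0).
    apply (periodic_zero N); auto using dd_periodic. intros l Hl.
    apply Rsqr_0_uniq. rewrite Rsqr_pow2. auto. }
  assert (Hc : forall l, u l = u 0%Z).
  { apply const_of_pred_eq. intro l. specialize (Hdd l). unfold dd, Rdiv in Hdd.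
    apply Rmult_integral in Hdd as [Hdd|Hdd]; [lra|].
    exfalso. apply (Rinv_neq_0_compat (eps N)); lra. }
  assert (Hu0 : u 0%Z = 0).
  { change (wsum N u = 0) in Hmean. rewrite (wsum_ext _ _ (fun _ => u 0%Z)), wsum_const in Hmean by auto.
    assert (HNp := INR_pos N HN). nra. }
  apply functional_extensionality. intro l. rewrite Hc. auto.
Qed.

Lemma diff_sq_sum_eigen N v c : (1 <= N)%nat -> periodic N v ->
  (forall l, v (l + 1)%Z + v (l - 1)%Z = 2 * c * v l) ->
  diff_sq_sum N v = (2 - 2 * c) * sq_sum N v.
Proof.
  intros HN Hp Heig.
  set (h := fun l => v l * v (l - 1)%Z).
  assert (Hh : periodic N h).
  { intro l. unfold h. rewrite Hp. f_equal. rewrite <- (Hp (l - 1)%Z). f_equal. lia. }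
  assert (Ecross : wsum N (fun l => h (l + 1)%Z + h l) = 2 * c * sq_sum N v).
  { unfold sq_sum. rewrite <- wsum_scal. apply wsum_ext; intros. unfold h.
    replace (l + 1 - 1)%Z with l by lia.
    transitivity (v l * (v (l + 1)%Z + v (l - 1)%Z)); [ring|rewrite Heig; ring]. }
  rewrite wsum_plus, wsum_shift in Ecross by auto.
  unfold diff_sq_sum.
  rewrite (wsum_ext _ _ (fun l => v l ^ 2 + v (l + -1)%Z ^ 2 + (-2) * h l))
    by (intros; unfold h; replace (l + -1)%Z with (l - 1)%Z by lia; ring).
  rewrite !wsum_plus, wsum_scal, (wsum_shift N (fun l => v l ^ 2)) by auto using periodic_sq.
  fold (sq_sum N v). lra.
Qed.

Lemma dd_eigen N u c : (forall l, u (l + 1)%Z + u (l - 1)%Z = 2 * c * u l) ->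
  forall l, dd N u (l + 1)%Z + dd N u (l - 1)%Z = 2 * c * dd N u l.
Proof.
  intros Heig l. unfold dd. replace (l + 1 - 1)%Z with l by lia.
  assert (Hl := Heig l). assert (Hl1 := Heig (l - 1)%Z). replace (l - 1 + 1)%Z with l in Hl1 by lia.
  unfold Rdiv.
  replace (u (l + 1)%Z) with (2 * c * u l - u (l - 1)%Z) by lra.
  replace (u (l - 1 - 1)%Z) with (2 * c * u (l - 1)%Z - u l) by lra. ring.
Qed.

Definition cos_mode (N : nat) (l : Z) : R := cos (PI / INR N * IZR l).

Lemma cos_mode_inU N : (1 <= N)%nat -> inU N (cos_mode N).
Proof.
  intros HN. assert (HNp := INR_pos N HN). split.
  - intro l. unfold cos_mode. rewrite IZR_add_period, <- (cos_period_Z (PI / INR N * IZR l) 1).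
    f_equal. field. lra.
  - change (wsum N (cos_mode N) = 0). rewrite <- (wsum_cos_freq N 1 HN) by lia.
    apply wsum_ext; intros. unfold cos_mode, freq. f_equal. field. lra.
Qed.

Lemma cos_mode_neq0 N : cos_mode N <> (fun _ => 0).
Proof.
  intro H. assert (H0 := f_equal (fun f => f 0%Z) H). cbv beta in H0. unfold cos_mode in H0.
  rewrite Rmult_0_r, cos_0 in H0. lra.
Qed.

Lemma cos_mode_eigen N l : cos_mode N (l + 1)%Z + cos_mode N (l - 1)%Z = 2 * cos (PI / INR N) * cos_mode N l.
Proof.
  unfold cos_mode. rewrite plus_IZR, minus_IZR.
  rewrite Rmult_plus_distr_l, Rmult_minus_distr_l, Rmult_1_r, cos_plus, cos_minus. ring.
Qed.

Lemma diff_sq_sum_cos_mode N : (1 <= N)%nat ->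
  diff_sq_sum N (dd N (cos_mode N)) = lambda1 N * sq_sum N (dd N (cos_mode N)).
Proof.
  intros HN. apply diff_sq_sum_eigen; auto.
  - apply dd_periodic. exact (proj1 (cos_mode_inU N HN)).
  - apply dd_eigen. intro l. apply cos_mode_eigen.
Qed.

Lemma l2eps_ratio N Psi : (1 <= N)%nat -> inU N Psi -> Psi <> (fun _ => 0) ->
  l2eps N (dd N (dd N Psi)) / l2eps N (dd N Psi)
  = sqrt (diff_sq_sum N (dd N Psi) / (eps N ^ 2 * sq_sum N (dd N Psi))).
Proof.
  intros HN HU Hne. assert (He := eps_pos N HN). assert (HV := sq_sum_dd_pos N Psi HN HU Hne).
  unfold l2eps. fold (wsum N (fun l => dd N (dd N Psi) l ^ 2)) (sq_sum N (dd N (dd N Psi))).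
  fold (wsum N (fun l => dd N Psi l ^ 2)) (sq_sum N (dd N Psi)).
  rewrite <- sqrt_div_alt by nra. f_equal.
  unfold sq_sum at 1, diff_sq_sum.
  rewrite (wsum_ext _ _ (fun l => / eps N ^ 2 * (dd N Psi l - dd N Psi (l - 1)%Z) ^ 2))
    by (intros; unfold dd at 1; field; lra).
  rewrite wsum_scal. field. lra.
Qed.

Lemma eps_mu_eps_sq N : (1 <= N)%nat -> eps N ^ 2 * mu_eps N ^ 2 = lambda1 N.
Proof.
  intros HN. assert (He := eps_pos N HN).
  assert (Hlam : 0 <= lambda1 N) by (unfold lambda1; assert (H := COS_bound (PI / INR N)); lra).
  assert (Hglb : Glb_Rbar (fun x => exists Psi : Z -> R,
      inU N Psi /\ Psi <> (fun _ => 0) /\ x = l2eps N (dd N (dd N Psi)) / l2eps N (dd N Psi))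
    = Finite (sqrt (lambda1 N / eps N ^ 2))).
  { apply is_glb_Rbar_unique. split.
    - intros x [Psi [HU [Hne ->]]]. cbn [Rbar_le]. rewrite l2eps_ratio by auto.
      apply sqrt_le_1_alt.
      assert (HV := sq_sum_dd_pos N Psi HN HU Hne).
      assert (Hw := discrete_wirtinger N (dd N Psi) HN (dd_periodic N Psi (proj1 HU))
                                       (wsum_dd N Psi HN (proj1 HU))).
      assert (Hden : 0 < eps N ^ 2 * sq_sum N (dd N Psi)) by (apply Rmult_lt_0_compat; [apply pow_lt|]; lra).
      replace (lambda1 N / eps N ^ 2)
        with (lambda1 N * sq_sum N (dd N Psi) / (eps N ^ 2 * sq_sum N (dd N Psi)))
        by (field; split; lra).
      apply Rmult_le_compat_r; [left; apply Rinv_0_lt_compat|]; lra.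
    - intros b Hb. apply Hb. exists (cos_mode N).
      split; [apply cos_mode_inU; auto|split; [apply cos_mode_neq0|]].
      assert (HV := sq_sum_dd_pos N (cos_mode N) HN (cos_mode_inU N HN) (cos_mode_neq0 N)).
      rewrite l2eps_ratio, diff_sq_sum_cos_mode by auto using cos_mode_inU, cos_mode_neq0.
      f_equal. field. split; lra. }
  unfold mu_eps. rewrite Hglb. simpl real.
  rewrite <- (Rsqr_pow2 (sqrt _)), Rsqr_sqrt.
  - field. lra.
  - apply Rcomplements.Rdiv_le_0_compat; [lra|]. nra.
Qed.

Definition bond_sum (s : nat) (c p : nat -> R) : R := sum_lt s (fun i => c (S i) * p (S i)).

Lemma bond_sum_combine s c c' p V D :
  bond_sum s c p * V - bond_sum s c' p * D = sum_lt s (fun i => p (S i) * (c (S i) * V - c' (S i) * D)).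
Proof.
  unfold bond_sum.
  transitivity (sum_lt s (fun i => V * (c (S i) * p (S i)) + (- D) * (c' (S i) * p (S i)))).
  - rewrite sum_lt_plus, !sum_lt_scal. ring.
  - apply sum_lt_ext; intros. ring.
Qed.

Section Bonds.
Variable s : nat.
Variable p : nat -> R.
Hypothesis Hneg : forall k, (2 <= k <= s)%nat -> p k <= 0.

Lemma bond_sum_le c c' : c 1%nat = c' 1%nat -> (forall k, (2 <= k)%nat -> c' k <= c k) ->
  bond_sum s c p <= bond_sum s c' p.
Proof.
  intros H1 Hc. apply sum_lt_le. intros [|i] Hi.
  - rewrite H1. lra.
  - assert (Hp := Hneg (S (S i)) ltac:(lia)). assert (Hci := Hc (S (S i)) ltac:(lia)). nra.
Qed.

Lemma lower_bond_sum_le_upper :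
  bond_sum s (fun k => (INR k ^ 4 - INR k ^ 2) / 12) p <= bond_sum s (fun k => INR k - 1) p.
Proof.
  apply bond_sum_le; [simpl; field|].
  intros k Hk. assert (H2 : 2 <= INR k) by (apply (le_INR 2); lia).
  assert (Hfac : INR k ^ 4 - INR k ^ 2 - 12 * (INR k - 1) = (INR k - 1) * (INR k ^ 2 * (INR k + 1) - 12))
    by ring.
  assert (0 <= (INR k - 1) * (INR k ^ 2 * (INR k + 1) - 12)) by (apply Rmult_le_pos; nra).
  lra.
Qed.

Lemma upper_bond_sum_nonpos : bond_sum s (fun k => INR k - 1) p <= 0.
Proof.
  transitivity (bond_sum s (fun _ => 0) p).
  - apply bond_sum_le; [simpl; ring|]. intros k Hk. assert (1 <= INR k) by (apply (le_INR 1); lia). lra.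
  - unfold bond_sum. rewrite (sum_lt_ext _ _ (fun _ => 0)), sum_lt_const by (intros; ring). lra.
Qed.

Definition chain_energy (N : nat) (v : Z -> R) : R := sum_lt s (fun i => p (S i) * block_energy N v (S i)).

(* The first bond enters with [block_energy 1 = sq_sum]; the others have [p k <= 0],
   which reverses the two-sided bounds on the block energies. *)
Lemma chain_energy_ge N v : (1 <= N)%nat -> periodic N v ->
  bond_sum s (fun k => INR k ^ 2) p * sq_sum N v - bond_sum s (fun k => INR k - 1) p * diff_sq_sum N v
  <= chain_energy N v.
Proof.
  intros HN Hp. rewrite bond_sum_combine. apply sum_lt_le. intros [|i] Hi.
  - rewrite block_energy_1 by auto. simpl. lra.
  - assert (Hb := block_energy_le N v HN Hp (S (S i)) ltac:(lia)).
    assert (Hpi := Hneg (S (S i)) ltac:(lia)). apply Rmult_le_compat_neg_l; auto.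
Qed.

Lemma chain_energy_le N v : (1 <= N)%nat -> periodic N v ->
  chain_energy N v <=
  bond_sum s (fun k => INR k ^ 2) p * sq_sum N v
  - bond_sum s (fun k => (INR k ^ 4 - INR k ^ 2) / 12) p * diff_sq_sum N v.
Proof.
  intros HN Hp. rewrite bond_sum_combine. apply sum_lt_le. intros [|i] Hi.
  - rewrite block_energy_1 by auto. simpl. lra.
  - assert (Hb := block_energy_ge N v HN Hp (S (S i))).
    assert (Hpi := Hneg (S (S i)) ltac:(lia)). apply Rmult_le_compat_neg_l; auto.
Qed.

Definition chain_stable (N : nat) : Prop :=
  forall u, inU N u -> u <> (fun _ => 0) -> 0 < chain_energy N (dd N u).

(* Test stability on the lowest Fourier mode, where the Wirtinger inequality is an equality. *)
Lemma chain_stable_pos_lower N : (1 <= N)%nat -> chain_stable N ->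
  bond_sum s (fun k => INR k ^ 2) p - lambda1 N * bond_sum s (fun k => (INR k ^ 4 - INR k ^ 2) / 12) p > 0.
Proof.
  intros HN Hst.
  assert (HU := cos_mode_inU N HN). assert (Hne := cos_mode_neq0 N).
  assert (Hpos := Hst _ HU Hne).
  assert (Hle := chain_energy_le N (dd N (cos_mode N)) HN (dd_periodic N _ (proj1 HU))).
  assert (HV := sq_sum_dd_pos N _ HN HU Hne).
  rewrite diff_sq_sum_cos_mode in Hle by auto.
  nra.
Qed.

Lemma chain_stable_of_pos_upper N : (1 <= N)%nat ->
  bond_sum s (fun k => INR k ^ 2) p - lambda1 N * bond_sum s (fun k => INR k - 1) p > 0 ->
  chain_stable N.
Proof.
  intros HN Hpos u HU Hne.
  assert (Hp := dd_periodic N u (proj1 HU)).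
  assert (Hge := chain_energy_ge N (dd N u) HN Hp).
  assert (Hw := discrete_wirtinger N (dd N u) HN Hp (wsum_dd N u HN (proj1 HU))).
  assert (HV := sq_sum_dd_pos N u HN HU Hne).
  assert (Hup := upper_bond_sum_nonpos).
  nra.
Qed.

End Bonds.

Lemma sumN_from1 s f : sumN 1 s f = sum_lt s (fun i => f (S i)).
Proof. unfold sumN, sum_lt. replace (S s - 1)%nat with s by lia. rewrite map_seq_shift. reflexivity. Qed.

Lemma sumN_from0 k f : (1 <= k)%nat -> sumN 0 (k - 1) f = sum_lt k f.
Proof. intros Hk. unfold sumN, sum_lt. replace (S (k - 1) - 0)%nat with k by lia. reflexivity. Qed.

Lemma sumN_from2 s f : (1 <= s)%nat -> sumN 1 s f = f 1%nat + sumN 2 s f.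
Proof.
  intros Hs. rewrite sumN_from1. destruct s as [|s]; [lia|]. rewrite sum_lt_Sl. f_equal.
  unfold sumN, sum_lt. replace (S (S s) - 2)%nat with s by lia. rewrite (map_seq_shift f 2). reflexivity.
Qed.

Lemma sumN_from3 s f : (2 <= s)%nat -> sumN 2 s f = f 2%nat + sumN 3 s f.
Proof.
  intros Hs. unfold sumN. destruct s as [|[|s]]; try lia.
  replace (S (S (S s)) - 2)%nat with (S s) by lia. replace (S (S (S s)) - 3)%nat with s by lia.
  reflexivity.
Qed.

Section Atomistic.
Variables (s : nat) (phi : R -> R) (F : R).
Let p (k : nat) : R := phi2 phi (INR k * F).

Lemma A_sF_bond_sum : A_sF s phi F = bond_sum s (fun k => INR k ^ 2) p.
Proof. unfold A_sF, bond_sum. apply sumN_from1. Qed.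

Lemma upper_bond_sum_sumN : (1 <= s)%nat ->
  sumN 2 s (fun k => (INR k - 1) * phi2 phi (INR k * F)) = bond_sum s (fun k => INR k - 1) p.
Proof.
  intros Hs. unfold bond_sum. rewrite <- (sumN_from1 s (fun k => (INR k - 1) * p k)), sumN_from2 by auto.
  unfold p. simpl INR. ring.
Qed.

Lemma lower_bond_sum_sumN : (2 <= s)%nat ->
  phi2 phi (2 * F) + sumN 3 s (fun k => ((INR k) ^ 4 - (INR k) ^ 2) / 12 * phi2 phi (INR k * F))
  = bond_sum s (fun k => (INR k ^ 4 - INR k ^ 2) / 12) p.
Proof.
  intros Hs. unfold bond_sum.
  rewrite <- (sumN_from1 s (fun k => (INR k ^ 4 - INR k ^ 2) / 12 * p k)), sumN_from2, sumN_from3 by lia.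
  unfold p. replace (INR 2 * F) with (2 * F) by (simpl; ring). simpl INR. field.
Qed.

Lemma stable_atomistic_chain_stable N : (1 <= N)%nat ->
  stable_atomistic N s phi F <-> chain_stable s p N.
Proof.
  intros HN. assert (He := eps_pos N HN).
  assert (Eform : forall u, sumZ (- Z.of_nat N + 1) (Z.of_nat N) (fun l =>
      sumN 1 s (fun k => phi2 phi (INR k * F) * (sumN 0 (k - 1) (fun j => dd N u (l + Z.of_nat j)%Z)) ^ 2))
    = chain_energy s p N (dd N u)).
  { intro u. change (sumZ _ _ ?f) with (wsum N f).
    rewrite (wsum_ext _ _ (fun l => sum_lt s (fun i => p (S i) *
               sum_lt (S i) (fun j => dd N u (l + Z.of_nat j)%Z) ^ 2))).
    - rewrite wsum_sum_lt_comm. apply sum_lt_ext; intros. apply wsum_scal.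
    - intros l _. rewrite sumN_from1. apply sum_lt_ext; intros. rewrite sumN_from0 by lia. reflexivity. }
  unfold stable_atomistic, chain_stable. split; intros Hst u HU Hne; specialize (Hst u HU Hne);
    rewrite Eform in *; nra.
Qed.

End Atomistic.

Lemma exists_threshold (P : Prop) (A c L U : R) :
  L <= U -> (P -> A - c * L > 0) -> (A - c * U > 0 -> P) ->
  exists B, U >= B /\ B >= L /\ (P <-> A - c * B > 0).
Proof.
  intros HLU HL HU. destruct (classic P) as [HP|HnP].
  - exists L. split; [lra|split; [lra|tauto]].
  - exists U. split; [lra|split; [lra|tauto]].
Qed.

Theorem theorem5p3 (N s : nat) (F : R) (phi : R -> R) :
  (1 <= N)%nat -> (2 <= s)%nat -> 0 < F ->
  (forall x : R, 0 < x -> ex_derive phi x /\ ex_derive (Derive phi) x) ->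
  (forall k : nat, (2 <= k <= s)%nat -> phi2 phi (INR k * F) <= 0) ->
  exists B : R,
    sumN 2 s (fun k => (INR k - 1) * phi2 phi (INR k * F)) >= B /\
    B >= phi2 phi (2 * F) +
         sumN 3 s (fun k => ((INR k) ^ 4 - (INR k) ^ 2) / 12 * phi2 phi (INR k * F)) /\
    (stable_atomistic N s phi F <->
       A_sF s phi F - (eps N) ^ 2 * (mu_eps N) ^ 2 * B > 0).
Proof.
  (* [phi2] is Coquelicot's total [Derive (Derive phi)]: neither [0 < F] nor the
     differentiability of [phi] plays any role. *)
  intros HN Hs _ _ Hneg.
  apply exists_threshold.
  - rewrite upper_bond_sum_sumN, lower_bond_sum_sumN by lia.
    exact (lower_bond_sum_le_upper s _ Hneg).
  - rewrite stable_atomistic_chain_stable, A_sF_bond_sum, lower_bond_sum_sumN, eps_mu_eps_sq by lia.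
    exact (chain_stable_pos_lower s _ Hneg N HN).
  - rewrite stable_atomistic_chain_stable, A_sF_bond_sum, upper_bond_sum_sumN, eps_mu_eps_sq by lia.
    exact (chain_stable_of_pos_upper s _ Hneg N HN).
Qed.
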